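(* Let $m,n,k$ be positive integers with $(m,k-1)=1$ and $n=\mathrm{ind}_m(k)$, let $G=G(m,n,k)=\langle a,b;\ a^m=1,\ b^n=1,\ b^{-1}ab=a^k\rangle$, and let $x,y\in\mathbb{Z}_m$. Then $|C(x,y)|=\dfrac{m}{(m,y)}$.
   Context: $\mathrm{ind}_m(k)$ is the least positive integer $d$ with $k^d\equiv1\pmod m$; $k_t=k^t-1\pmod m$. Elements of $G$ are written uniquely as $a^ib^j$, $i\in\mathbb{Z}_m$, $j\in\mathbb{Z}_n$. For $x,y\in\mathbb{Z}_m$, $\mu(x,y):G\to G$ is $(a^ib^j)\mu(x,y)=a^{xik^j-yk_j}$, and $C(x,y)=\{\mu(x,yz):z\in\mathbb{Z}_m\}$ is a set of maps $G\to G$; $(m,y)$ denotes the gcd of $m$ and (a representative of) $y$. *)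

From mathcomp Require Import all_boot.
Set Implicit Arguments. Unset Strict Implicit. Unset Printing Implicit Defensive.

Definition is_ind (m k n : nat) : Prop :=
  [/\ 0 < n, k ^ n = 1 %[mod m] & forall d, 0 < d < n -> k ^ d <> 1 %[mod m]].

(* Elements a^i b^j of G(m,n,k) are represented by their unique normal-form
   exponents (i, j) in Z_m x Z_n. *)
Definition Gelt (m n : nat) := ('I_m * 'I_n)%type.

(* residue of v in Z_m, given a witness i : 'I_m (so that m > 0) *)
Definition mod_of (m : nat) (i : 'I_m) (v : nat) : 'I_m :=
  Ordinal (ltn_pmod v (leq_ltn_trans (leq0n i) (ltn_ord i))).

Definition zero_of (n : nat) (j : 'I_n) : 'I_n :=
  Ordinal (leq_ltn_trans (leq0n j) (ltn_ord j)).

(* (a^i b^j) mu(x,y) = a^(x i k^j - y k_j),  k_j = k^j - 1 (mod m).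
   The subtraction is done mod m as  (A + (m - (B mod m))) mod m. *)
Definition mu_fun (m n k x y : nat) (g : Gelt m n) : Gelt m n :=
  let: (i, j) := g in
  (mod_of i (x * i * k ^ j + (m - (y * (k ^ j - 1)) %% m)), zero_of j).
Arguments mu_fun : clear implicits.

Definition mu (m n k x y : nat) : {ffun Gelt m n -> Gelt m n} :=
  [ffun g => mu_fun m n k x y g].

Definition Cset (m n k : nat) (x y : 'I_m) : {set {ffun Gelt m n -> Gelt m n}} :=
  [set mu m n k x (y * z) | z : 'I_m].
Arguments mu : clear implicits.
Arguments Cset : clear implicits.

From mathcomp Require Import all_boot.

(* The map mu(x, a) depends only on a mod m, and conversely determines a mod m:
   it sends b to a^(-a(k-1)), and k - 1 is invertible mod m (the index n
   exceeds 1 because k is not 1 mod m once m > 1).  Hence C(x, y) is in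
   bijection with the multiples y z mod m, and y a = y b (mod m) exactly when
   a = b (mod m/(m,y)), so there are m/(m,y) of them. *)

Set Implicit Arguments.
Unset Strict Implicit.
Unset Printing Implicit Defensive.

Lemma eqn_modMr_coprime m c a b :
  coprime m c -> (a * c == b * c %[mod m]) = (a == b %[mod m]).
Proof.
move=> co_mc; wlog le_ba : a b / b <= a.
  by move=> IH; case/orP: (leq_total b a) => /IH //; rewrite eq_sym [RHS]eq_sym.
by rewrite !eqn_mod_dvd ?leq_mul2r ?le_ba ?orbT // -mulnBl Gauss_dvdl.
Qed.

Lemma eqn_mod_oppn m u v :
  0 < m -> (m - u %% m == m - v %% m %[mod m]) = (u == v %[mod m]).
Proof.
move=> m_gt0; have le_mod w : w %% m <= m by rewrite ltnW ?ltn_pmod.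
rewrite -(eqn_modDr (u %% m + v %% m)) addnA subnK // [u %% m + _]addnC addnA.
by rewrite subnK // !modnDl !modn_mod eq_sym.
Qed.

Lemma coprime_divn_gcd m y : 0 < m -> coprime (m %/ gcdn m y) (y %/ gcdn m y).
Proof.
move=> m_gt0; have g_gt0 : 0 < gcdn m y by rewrite gcdn_gt0 m_gt0.
by rewrite /coprime -(eqn_pmul2r g_gt0) mul1n muln_gcdl !divnK ?dvdn_gcdl ?dvdn_gcdr.
Qed.

Lemma eqn_modMl_gcd m y a b :
  0 < m -> (y * a == y * b %[mod m]) = (a == b %[mod m %/ gcdn m y]).
Proof.
move=> m_gt0; have := coprime_divn_gcd y m_gt0.
set g := gcdn m y; set m' := m %/ g; set y' := y %/ g => co_my.
have g_gt0 : 0 < g by rewrite gcdn_gt0 m_gt0.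
have -> : m = m' * g by rewrite divnK ?dvdn_gcdl.
have -> : y = y' * g by rewrite divnK ?dvdn_gcdr.
rewrite ![y' * g * _]mulnAC -!muln_modl eqn_pmul2r // ![y' * _]mulnC.
by rewrite eqn_modMr_coprime.
Qed.

Lemma card_imset_mulmod (T : finType) (f : nat -> T) m y :
  0 < m -> (forall a b, (f a == f b) = (a == b %[mod m])) ->
  #|[set f (y * z) | z : 'I_m]| = m %/ gcdn m y.
Proof.
move=> m_gt0 f_mod; set m' := m %/ gcdn m y.
have m'_gt0 : 0 < m' by rewrite divn_gt0 ?gcdn_gt0 ?m_gt0 // dvdn_leq // dvdn_gcdl.
have le_m'm : m' <= m by rewrite leq_div.
have f_mulE a b : (f (y * a) == f (y * b)) = (a == b %[mod m']).
  by rewrite f_mod eqn_modMl_gcd.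
have -> : [set f (y * z) | z : 'I_m] = [set f (y * z) | z : 'I_m'].
  apply/setP => t; apply/imsetP/imsetP => -[z _ ->].
    by exists (Ordinal (ltn_pmod z m'_gt0)) => //; apply/eqP; rewrite f_mulE modn_mod.
  by exists (Ordinal (leq_trans (ltn_ord z) le_m'm)).
rewrite card_imset ?card_ord // => z1 z2 /eqP.
by rewrite f_mulE !modn_small // => /eqP; apply: val_inj.
Qed.

Lemma mu_eq_mod m n k x a b : a = b %[mod m] -> mu m n k x a = mu m n k x b.
Proof.
move=> eq_ab; apply/ffunP => -[i j]; rewrite !ffunE /=; congr (_, _).
by apply: val_inj => /=; rewrite -modnMml eq_ab modnMml.
Qed.

Lemma is_ind_gt1 m k n : 1 < m -> coprime m (k - 1) -> is_ind m k n -> 1 < n.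
Proof.
move=> m_gt1 co_mk [n_gt0 kn_1 _]; rewrite ltn_neqAle eq_sym n_gt0 andbT.
apply/eqP => n1; move: kn_1 co_mk; rewrite n1 expn1.
case: k => [|k]; first by rewrite mod0n modn_small.
move/eqP; rewrite eqn_mod_dvd // subn1 => /gcdn_idPl.
by rewrite /coprime => ->; rewrite gtn_eqF.
Qed.

Lemma eq_mu m n k x a b :
  0 < m -> coprime m (k - 1) -> is_ind m k n ->
  (mu m n k x a == mu m n k x b) = (a == b %[mod m]).
Proof.
move=> m_gt0 co_mk ind_n; apply/eqP/eqP => [mu_ab|]; last exact: mu_eq_mod.
have [m_le1|m_gt1] := leqP m 1.
  have m1 : m = 1 by apply/eqP; rewrite eqn_leq m_le1.
  by rewrite m1 !modn1.
pose g : Gelt m n := (Ordinal m_gt0, Ordinal (is_ind_gt1 m_gt1 co_mk ind_n)).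
(* the image of a^0 b^1 under mu(x, a) is a^(-a(k-1)) *)
have /eqP := congr1 (fun f : {ffun Gelt m n -> Gelt m n} => val (f g).1) mu_ab.
rewrite !ffunE /= muln0 mul0n expn1 !add0n.
by rewrite eqn_mod_oppn // eqn_modMr_coprime // => /eqP.
Qed.

Theorem corollary3p7 (m n k : nat) :
  0 < m -> 0 < n -> 0 < k ->
  coprime m (k - 1) ->
  is_ind m k n ->
  forall x y : 'I_m, #|Cset m n k x y| = m %/ gcdn m y.
Proof.
move=> m_gt0 _ _ co_mk ind_n x y.
by apply: card_imset_mulmod => // a b; apply: eq_mu.
Qed.
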